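(* Let $(X,d)$ be a complete metric space with $|X|\geqslant 3$ and let $T\colon X\to X$ be continuous and asymptotically regular. Suppose there exist $\alpha\in[0,\frac12)$ and functions $\beta_1,\beta_2,\beta_3\colon[0,\infty)\to[0,\infty)$ with $\limsup_{t\to0}\beta_i(t)<\infty$ for $i=1,2,3$, such that $$d(Tx,Ty)+d(Ty,Tz)+d(Tx,Tz)\leqslant \alpha\big(d(x,y)+d(y,z)+d(x,z)\big)+\beta_1(d(x,Tx))\,d(x,Tx)+\beta_2(d(y,Ty))\,d(y,Ty)+\beta_3(d(z,Tz))\,d(z,Tz)$$ for all pairwise distinct $x,y,z\in X$. Then $T$ has a fixed point, and $T$ has at most two fixed points.
   Context: A mapping $T\colon X\to X$ on a metric space is asymptotically regular if $\lim_{n\to\infty}d(T^{n+1}x,T^nx)=0$ for every $x\in X$. *)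

From Stdlib Require Export Reals.
Open Scope R_scope.

Definition is_metric {X : Type} (d : X -> X -> R) : Prop :=
  (forall x y, 0 <= d x y) /\
  (forall x y, d x y = 0 <-> x = y) /\
  (forall x y, d x y = d y x) /\
  (forall x y z, d x z <= d x y + d y z).

Definition d_cauchy {X : Type} (d : X -> X -> R) (u : nat -> X) : Prop :=
  forall eps, 0 < eps -> exists N, forall m n, (N <= m)%nat -> (N <= n)%nat ->
    d (u m) (u n) < eps.

Definition d_converges {X : Type} (d : X -> X -> R) (u : nat -> X) (l : X) : Prop :=
  forall eps, 0 < eps -> exists N, forall n, (N <= n)%nat -> d (u n) l < eps.

Definition d_complete {X : Type} (d : X -> X -> R) : Prop :=
  forall u, d_cauchy d u -> exists l, d_converges d u l.

Definition d_continuous {X : Type} (d : X -> X -> R) (T : X -> X) : Prop :=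
  forall x eps, 0 < eps -> exists delta, 0 < delta /\
    forall y, d x y < delta -> d (T x) (T y) < eps.

Definition asymptotically_regular {X : Type} (d : X -> X -> R) (T : X -> X) : Prop :=
  forall x, Un_cv (fun n => d (Nat.iter (S n) T x) (Nat.iter n T x)) 0.

(* limsup_{t -> 0} beta t < oo, for beta defined on [0,oo) (so t -> 0+,
   punctured): beta is bounded above on some interval (0, delta). *)
Definition limsup_at0_finite (beta : R -> R) : Prop :=
  exists M delta, 0 < delta /\ forall t, 0 < t < delta -> beta t <= M.

(* Suppose T has no fixed point.  Then the iterates u_n of a point are pairwise distinct (a
   repetition would make the orbit periodic, contradicting asymptotic regularity).  For the
   triangle u_n, u_(n+1), u_m the triangle inequality bounds its perimeter P by the perimeter of
   its image plus twice the three displacements d(u_k, T u_k); with M a bound for the betas near 0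
   this gives (1 - alpha) P <= (2 + M) (sum of the displacements), which tends to 0.  So the orbit
   is Cauchy, and by continuity its limit is a fixed point.  Three distinct fixed points would
   span a triangle with P <= alpha P. *)
From Stdlib Require Import Reals Lra Lia Classical.
Open Scope R_scope.
Set Implicit Arguments.

Definition bounded_near0 (beta : R -> R) (M delta : R) : Prop :=
  forall t, 0 <= t < delta -> beta t * t <= M * t.

Lemma bounded_near0_weaken beta M delta M' delta' :
  bounded_near0 beta M delta -> M <= M' -> delta' <= delta ->
  bounded_near0 beta M' delta'.
Proof.
  intros Hb HM Hdelta t Ht.
  apply Rle_trans with (M * t); [apply Hb; lra | apply Rmult_le_compat_r; lra].
Qed.

Lemma limsup_at0_finite_bounded_near0 beta :
  limsup_at0_finite beta -> exists M delta, 0 <= M /\ 0 < delta /\ bounded_near0 beta M delta.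
Proof.
  intros [M [delta [Hdelta Hb]]].
  exists (Rmax M 0), delta; split; [apply Rmax_r | split; [exact Hdelta |]].
  intros t Ht.
  destruct (Req_dec t 0) as [-> | Ht0]; [lra |].
  apply Rmult_le_compat_r; [lra |].
  apply Rle_trans with M; [apply Hb; lra | apply Rmax_l].
Qed.

Lemma limsup_at0_finite_common_bound beta1 beta2 beta3 :
  limsup_at0_finite beta1 -> limsup_at0_finite beta2 -> limsup_at0_finite beta3 ->
  exists M delta, 0 <= M /\ 0 < delta /\
    bounded_near0 beta1 M delta /\ bounded_near0 beta2 M delta /\ bounded_near0 beta3 M delta.
Proof.
  intros H1 H2 H3.
  destruct (limsup_at0_finite_bounded_near0 H1) as (M1 & d1 & HM1 & Hd1 & Hb1).
  destruct (limsup_at0_finite_bounded_near0 H2) as (M2 & d2 & HM2 & Hd2 & Hb2).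
  destruct (limsup_at0_finite_bounded_near0 H3) as (M3 & d3 & HM3 & Hd3 & Hb3).
  set (M := Rmax M1 (Rmax M2 M3)); set (delta := Rmin d1 (Rmin d2 d3)).
  assert (HM1' : M1 <= M) by apply Rmax_l.
  assert (HM2' : M2 <= M) by (eapply Rle_trans; [apply Rmax_l | apply Rmax_r]).
  assert (HM3' : M3 <= M) by (eapply Rle_trans; [apply Rmax_r | apply Rmax_r]).
  assert (Hd1' : delta <= d1) by apply Rmin_l.
  assert (Hd2' : delta <= d2) by (eapply Rle_trans; [apply Rmin_r | apply Rmin_l]).
  assert (Hd3' : delta <= d3) by (eapply Rle_trans; [apply Rmin_r | apply Rmin_r]).
  exists M, delta; repeat split.
  - lra.
  - unfold delta; repeat apply Rmin_pos; assumption.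
  - exact (bounded_near0_weaken Hb1 HM1' Hd1').
  - exact (bounded_near0_weaken Hb2 HM2' Hd2').
  - exact (bounded_near0_weaken Hb3 HM3' Hd3').
Qed.

Lemma iter_periodic {X : Type} {T : X -> X} {x : X} {n p : nat} :
  Nat.iter n T x = Nat.iter (n + p) T x ->
  forall j, Nat.iter (n + j * p) T x = Nat.iter n T x.
Proof.
  intros E j; induction j as [| j IH].
  - now rewrite Nat.add_0_r.
  - replace (n + S j * p)%nat with (p + (n + j * p))%nat by lia.
    rewrite Nat.iter_add, IH, <- Nat.iter_add, Nat.add_comm.
    now symmetry.
Qed.

Section MetricSpace.

Context {X : Type} (d : X -> X -> R).
Hypothesis Hd : is_metric d.

Lemma dist_nonneg x y : 0 <= d x y.
Proof. apply Hd. Qed.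

Lemma dist_eq0 x y : d x y = 0 <-> x = y.
Proof. apply Hd. Qed.

Lemma dist_refl x : d x x = 0.
Proof. now apply dist_eq0. Qed.

Lemma dist_sym x y : d x y = d y x.
Proof. apply Hd. Qed.

Lemma dist_triangle x y z : d x z <= d x y + d y z.
Proof. apply Hd. Qed.

Lemma dist_pos x y : x <> y -> 0 < d x y.
Proof.
  intro Hxy; destruct (dist_nonneg x y) as [| E]; [assumption |].
  now exfalso; apply Hxy, dist_eq0.
Qed.

Lemma dist_quadrangle x y x' y' : d x y <= d x x' + d x' y' + d y y'.
Proof.
  pose proof (dist_triangle x x' y); pose proof (dist_triangle x' y' y).
  rewrite (dist_sym y' y) in *; lra.
Qed.

Definition contracts_perimeters (T : X -> X) (alpha : R) (beta1 beta2 beta3 : R -> R) : Prop :=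
  forall x y z, x <> y -> y <> z -> x <> z ->
    d (T x) (T y) + d (T y) (T z) + d (T x) (T z) <=
    alpha * (d x y + d y z + d x z)
    + beta1 (d x (T x)) * d x (T x)
    + beta2 (d y (T y)) * d y (T y)
    + beta3 (d z (T z)) * d z (T z).

Lemma asymptotically_regular_step T :
  asymptotically_regular d T ->
  forall x eta, 0 < eta -> exists N, forall n, (N <= n)%nat ->
    d (Nat.iter (S n) T x) (Nat.iter n T x) < eta.
Proof.
  intros Hreg x eta Heta.
  destruct (Hreg x eta Heta) as [N HN]; exists N; intros n Hn.
  specialize (HN n Hn); unfold R_dist in HN.
  now rewrite Rminus_0_r, Rabs_pos_eq in HN by apply dist_nonneg.
Qed.

Lemma orbit_injective T :
  asymptotically_regular d T -> (forall y, T y <> y) ->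
  forall x n m, Nat.iter n T x = Nat.iter m T x -> n = m.
Proof.
  intros Hreg Hnofix x.
  assert (no_return : forall n p, Nat.iter n T x <> Nat.iter (n + S p) T x).
  { intros n p E.
    pose proof (iter_periodic E) as Hper.
    pose proof (dist_pos (Hnofix (Nat.iter n T x))) as Hstep.
    destruct (asymptotically_regular_step Hreg x Hstep) as [N HN].
    specialize (HN (n + N * S p)%nat ltac:(nia)).
    simpl in HN; rewrite Hper in HN; lra. }
  intros n m E.
  destruct (Nat.lt_trichotomy n m) as [Hnm | [Hnm | Hnm]]; [| exact Hnm |].
  - exfalso; apply (no_return n (m - n - 1)%nat).
    rewrite E; f_equal; lia.
  - exfalso; apply (no_return m (n - m - 1)%nat).
    rewrite <- E; f_equal; lia.
Qed.

Lemma perimeter_le_displacements T alpha beta1 beta2 beta3 x y z :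
  contracts_perimeters T alpha beta1 beta2 beta3 -> x <> y -> y <> z -> x <> z ->
  (1 - alpha) * (d x y + d y z + d x z) <=
  2 * (d x (T x) + d y (T y) + d z (T z))
  + beta1 (d x (T x)) * d x (T x)
  + beta2 (d y (T y)) * d y (T y)
  + beta3 (d z (T z)) * d z (T z).
Proof.
  intros Hc Hxy Hyz Hxz.
  pose proof (Hc x y z Hxy Hyz Hxz).
  pose proof (dist_quadrangle x y (T x) (T y)).
  pose proof (dist_quadrangle y z (T y) (T z)).
  pose proof (dist_quadrangle x z (T x) (T z)).
  lra.
Qed.

Lemma dist_le_displacements T alpha beta1 beta2 beta3 M delta x y z :
  contracts_perimeters T alpha beta1 beta2 beta3 -> alpha < 1 ->
  bounded_near0 beta1 M delta -> bounded_near0 beta2 M delta -> bounded_near0 beta3 M delta ->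
  x <> y -> y <> z -> x <> z ->
  d x (T x) < delta -> d y (T y) < delta -> d z (T z) < delta ->
  (1 - alpha) * d x z <= (2 + M) * (d x (T x) + d y (T y) + d z (T z)).
Proof.
  intros Hc Halpha Hb1 Hb2 Hb3 Hxy Hyz Hxz Hx Hy Hz.
  pose proof (perimeter_le_displacements Hc Hxy Hyz Hxz).
  pose proof (Hb1 _ (conj (dist_nonneg x (T x)) Hx)).
  pose proof (Hb2 _ (conj (dist_nonneg y (T y)) Hy)).
  pose proof (Hb3 _ (conj (dist_nonneg z (T z)) Hz)).
  assert ((1 - alpha) * d x z <= (1 - alpha) * (d x y + d y z + d x z)).
  { apply Rmult_le_compat_l; [lra |].
    pose proof (dist_nonneg x y); pose proof (dist_nonneg y z); lra. }
  lra.
Qed.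

Lemma orbit_cauchy T alpha beta1 beta2 beta3 x0 :
  asymptotically_regular d T -> (forall y, T y <> y) -> alpha < 1 ->
  limsup_at0_finite beta1 -> limsup_at0_finite beta2 -> limsup_at0_finite beta3 ->
  contracts_perimeters T alpha beta1 beta2 beta3 ->
  d_cauchy d (fun n => Nat.iter n T x0).
Proof.
  intros Hreg Hnofix Halpha Hl1 Hl2 Hl3 Hc eps Heps.
  set (u n := Nat.iter n T x0).
  destruct (limsup_at0_finite_common_bound Hl1 Hl2 Hl3)
    as (M & delta & HM & Hdelta & Hb1 & Hb2 & Hb3).
  set (eta := Rmin delta (Rmin eps ((1 - alpha) * eps / (3 * (2 + M))))).
  assert (Heta : 0 < eta).
  { unfold eta; repeat apply Rmin_pos; try lra.
    apply Rdiv_lt_0_compat; [apply Rmult_lt_0_compat |]; lra. }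
  assert (eta_delta : eta <= delta) by apply Rmin_l.
  assert (eta_eps : eta <= eps) by (eapply Rle_trans; [apply Rmin_r | apply Rmin_l]).
  assert (eta_scaled : 3 * (2 + M) * eta <= (1 - alpha) * eps).
  { assert (Hle : eta <= (1 - alpha) * eps / (3 * (2 + M)))
      by (eapply Rle_trans; [apply Rmin_r | apply Rmin_r]).
    apply Rmult_le_compat_l with (r := 3 * (2 + M)) in Hle; [| lra].
    field_simplify in Hle; lra. }
  destruct (asymptotically_regular_step Hreg x0 Heta) as [N HN].
  assert (Hdisp : forall k, (N <= k)%nat -> d (u k) (T (u k)) < eta)
    by (intros k Hk; rewrite dist_sym; exact (HN k Hk)).
  exists N; intros n m Hn Hm; fold (u n) (u m).
  destruct (Nat.eq_dec m n) as [-> | Hmn]; [rewrite dist_refl; lra |].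
  destruct (Nat.eq_dec m (S n)) as [-> | Hmn'].
  { specialize (Hdisp n Hn); change (u (S n)) with (T (u n)); lra. }
  destruct (Nat.eq_dec n (S m)) as [-> | Hnm'].
  { specialize (HN m Hm); fold (u (S m)) (u m) in HN; lra. }
  assert (Hinj : forall i j, i <> j -> u i <> u j)
    by (intros i j Hij E; exact (Hij (orbit_injective Hreg Hnofix _ _ _ E))).
  pose proof (dist_le_displacements Hc Halpha Hb1 Hb2 Hb3
                (Hinj n (S n) ltac:(lia)) (Hinj (S n) m ltac:(lia)) (Hinj n m ltac:(lia))
                ltac:(specialize (Hdisp n Hn); lra)
                ltac:(specialize (Hdisp (S n) ltac:(lia)); lra)
                ltac:(specialize (Hdisp m Hm); lra)) as Hbound.
  pose proof (Hdisp n Hn); pose proof (Hdisp (S n) ltac:(lia)); pose proof (Hdisp m Hm).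
  assert ((1 - alpha) * d (u n) (u m) < (1 - alpha) * eps) by nra.
  apply Rmult_lt_reg_l with (1 - alpha); lra.
Qed.

Lemma orbit_limit_fixed T x0 l :
  d_continuous d T -> d_converges d (fun n => Nat.iter n T x0) l -> T l = l.
Proof.
  intros Hcont Hconv.
  apply dist_eq0.
  destruct (dist_nonneg (T l) l) as [Hpos | E]; [exfalso | now symmetry].
  set (eps := d (T l) l) in *.
  destruct (Hcont l (eps / 2) ltac:(lra)) as [delta [Hdelta Hc]].
  destruct (Hconv delta Hdelta) as [N1 HN1].
  destruct (Hconv (eps / 2) ltac:(lra)) as [N2 HN2].
  specialize (HN1 (N1 + N2)%nat ltac:(lia)).
  specialize (HN2 (S (N1 + N2)) ltac:(lia)).
  rewrite dist_sym in HN1; specialize (Hc _ HN1).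
  pose proof (dist_triangle (T l) (Nat.iter (S (N1 + N2)) T x0) l).
  simpl in *; unfold eps in *; lra.
Qed.

Lemma at_most_two_fixed_points T alpha beta1 beta2 beta3 :
  contracts_perimeters T alpha beta1 beta2 beta3 -> alpha < 1 ->
  forall x y z, T x = x -> T y = y -> T z = z -> x = y \/ y = z \/ x = z.
Proof.
  intros Hc Halpha x y z Fx Fy Fz.
  destruct (classic (x = y)) as [| Hxy]; [now left |].
  destruct (classic (y = z)) as [| Hyz]; [now right; left |].
  destruct (classic (x = z)) as [| Hxz]; [now right; right |].
  exfalso.
  pose proof (Hc x y z Hxy Hyz Hxz) as H.
  rewrite Fx, Fy, Fz, !dist_refl in H.
  pose proof (dist_pos Hxy); pose proof (dist_nonneg y z); pose proof (dist_nonneg x z).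
  nra.
Qed.

End MetricSpace.

Theorem corollary4p7 (X : Type) (d : X -> X -> R) (T : X -> X)
  (alpha : R) (beta1 beta2 beta3 : R -> R) :
  is_metric d ->
  d_complete d ->
  (exists a b c : X, a <> b /\ b <> c /\ a <> c) ->
  d_continuous d T ->
  asymptotically_regular d T ->
  0 <= alpha < 1 / 2 ->
  (forall t, 0 <= t -> 0 <= beta1 t) ->
  (forall t, 0 <= t -> 0 <= beta2 t) ->
  (forall t, 0 <= t -> 0 <= beta3 t) ->
  limsup_at0_finite beta1 ->
  limsup_at0_finite beta2 ->
  limsup_at0_finite beta3 ->
  (forall x y z, x <> y -> y <> z -> x <> z ->
     d (T x) (T y) + d (T y) (T z) + d (T x) (T z) <=
     alpha * (d x y + d y z + d x z)
     + beta1 (d x (T x)) * d x (T x)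
     + beta2 (d y (T y)) * d y (T y)
     + beta3 (d z (T z)) * d z (T z)) ->
  (exists x, T x = x) /\
  (forall x y z, T x = x -> T y = y -> T z = z ->
     x = y \/ y = z \/ x = z).
Proof.
  intros Hd Hcomp [x0 _] Hcont Hreg Halpha _ _ _ Hl1 Hl2 Hl3 Hc.
  assert (Halpha1 : alpha < 1) by lra.
  split; [| exact (at_most_two_fixed_points Hd Hc Halpha1)].
  apply NNPP; intro Hnone.
  assert (Hnofix : forall y, T y <> y) by (intros y Hy; apply Hnone; now exists y).
  destruct (Hcomp _ (orbit_cauchy Hd x0 Hreg Hnofix Halpha1 Hl1 Hl2 Hl3 Hc)) as [l Hl].
  exact (Hnofix l (orbit_limit_fixed Hd x0 Hcont Hl)).
Qed.
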